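(* Let $n\ge2$. For $j\in\{1,\dots,n\}$ let $L_j\in\mathcal G(n)$ be the $n$-graph with edges $a_1\to a_2,\ a_2\to a_3,\dots,a_{n-1}\to a_n$, where $(a_1,\dots,a_n)=(2,3,\dots,j,1,j+1,\dots,n)$ is the sequence obtained from $(2,3,\dots,n)$ by inserting $1$ in position $j$ (so $L_1$ has edges $1\to2\to\dots\to n$ and $L_n$ has edges $2\to3\to\dots\to n\to1$). Then $$\sum_{j=1}^n L_j\equiv 0 \pmod{R(n)}.$$
   Context: An $n$-graph is an oriented graph with vertex set $\{1,\dots,n\}$, without loops but possibly with multiple edges; $\mathcal G(n)$ is the set of $n$-graphs and $\mathbb F\mathcal G(n)$ the vector space over a field $\mathbb F$ (characteristic $0$) with basis $\mathcal G(n)$. $R(n)\subset\mathbb F\mathcal G(n)$ is the subspace spanned by the cycle relations: (i) every $\Gamma\in\mathcal G(n)$ that contains a cycle of its underlying unoriented multigraph (two edges joining the same two vertices count as a cycle); (ii) every sum $\sum_{e\in C}\Gamma\setminus e$, where $\Gamma\in\mathcal G(n)$, $C\subset E(\Gamma)$ is an oriented cycle, and $\Gamma\setminus e$ is $\Gamma$ with the edge $e$ removed. $\equiv$ denotes equality in $\mathbb F\mathcal G(n)/R(n)$. *)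

From mathcomp Require Import all_boot all_algebra.
Set Implicit Arguments. Unset Strict Implicit. Unset Printing Implicit Defensive.
Import GRing.Theory.
Local Open Scope ring_scope.

(* Vertices {1,...,n} are represented by 'I_n (vertex i+1 <-> ordinal i).
   An n-graph (oriented, multiple edges allowed, no loops) is given by its
   edge-multiplicity function: G (x,y) = number of edges x -> y. *)
Definition graph (n : nat) := {ffun 'I_n * 'I_n -> nat}.

Definition is_ngraph n (G : graph n) : Prop := forall x : 'I_n, G (x, x) = 0%N.

Definition uedges n (G : graph n) (x y : 'I_n) : nat := (G (x, y) + G (y, x))%N.

(* G contains a cycle of its underlying unoriented multigraph:
   either two edges joining the same two distinct vertices, or a cycle
   through k >= 3 distinct vertices. *)
Definition has_ucycle n (G : graph n) : Prop :=
  (exists a b : 'I_n, a != b /\ (2 <= uedges G a b)%N) \/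
  (exists (k : nat) (v : 'I_k.+3 -> 'I_n),
      injective v /\ forall i, (1 <= uedges G (v i) (v (ordS i)))%N).

Definition remove_edge n (G : graph n) (e : 'I_n * 'I_n) : graph n :=
  [ffun f => (G f - (f == e))%N].

(* Elements of F G(n): (finitely supported) functions graph n -> F. *)
Definition vec (F : fieldType) n := graph n -> F.

Definition basis (F : fieldType) n (G : graph n) : vec F n :=
  fun D => (D == G)%:R.

Definition cycle_rel (F : fieldType) n (r : vec F n) : Prop :=
  (exists G : graph n, is_ngraph G /\ has_ucycle G /\
      forall D, r D = basis F G D) \/
  (exists (G : graph n) (k : nat) (v : 'I_k.+2 -> 'I_n),
      [/\ is_ngraph G, injective v,
          (forall i, (1 <= G (v i, v (ordS i)))%N) &
          forall D, r D = \sum_(i < k.+2) basis F (remove_edge G (v i, v (ordS i))) D]).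

Definition in_R (F : fieldType) n (x : vec F n) : Prop :=
  exists (m : nat) (c : 'I_m -> F) (r : 'I_m -> vec F n),
    (forall i, cycle_rel (r i)) /\ forall D, x D = \sum_(i < m) c i * r i D.

(* The vertex sequence (2,...,j,1,j+1,...,n) with j = k+1, 0-indexed:
   1,...,n-1 with 0 inserted at position k. *)
Definition Lseq (n k : nat) : seq nat :=
  take k (iota 1 n.-1) ++ 0%N :: drop k (iota 1 n.-1).

Definition Lgraph n (k : nat) : graph n :=
  [ffun e : 'I_n * 'I_n =>
     count (fun p : nat * nat => (p.1 == val e.1) && (p.2 == val e.2))
           (zip (Lseq n k) (behead (Lseq n k)))].

(* Number the vertices 0..n-1 and the graphs L_0..L_(n-1), so that L_k is
   the paper's L_(k+1).  Let P be the path 1 -> 2 -> ... -> n-1 and put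
   T_v = P + (0 -> v), S_v = P + (v -> 0).  Then L_0 = T_1 and
   L_(n-1) = S_(n-1).  For 0 < k < n-1, the three-cycle k -> 0 -> k+1 -> k in
   L_k + (k+1 -> k), together with the two-cycles k <-> k+1 and 0 <-> k,
   gives L_k = T_(k+1) - T_k modulo R(n).  Hence the sum telescopes to
   T_(n-1) + S_(n-1), the relation of the two-cycle 0 <-> n-1. *)
From mathcomp Require Import all_boot all_algebra.
From mathcomp Require Import zify ring.
Set Implicit Arguments. Unset Strict Implicit. Unset Printing Implicit Defensive.
Import GRing.Theory.

Section SpanOfCycleRelations.
Variables (F : fieldType) (n : nat).
Implicit Types x y : vec F n.
Local Open Scope ring_scope.

Lemma cycle_rel_in_R x : cycle_rel x -> in_R x.
Proof.
move=> rel_x; exists 1%N, (fun _ => 1), (fun _ => x); split=> // D.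
by rewrite big_ord1 mul1r.
Qed.

Lemma in_R_ext x y : x =1 y -> in_R x -> in_R y.
Proof.
move=> eq_xy [m [c [r [rel_r def_x]]]]; exists m, c, r; split=> // D.
by rewrite -eq_xy def_x.
Qed.

Lemma in_R0 : in_R (fun _ : graph n => 0 : F).
Proof.
exists 0%N, (fun _ => 0), (fun _ _ => 0); split=> [[]|D] //.
by rewrite big_ord0.
Qed.

Lemma in_RD x y : in_R x -> in_R y -> in_R (fun D => x D + y D).
Proof.
move=> [m1 [c1 [r1 [rel1 def_x]]]] [m2 [c2 [r2 [rel2 def_y]]]].
pose glue T (u : 'I_m1 -> T) (v : 'I_m2 -> T) i :=
  match split i with inl j => u j | inr j => v j end.
exists (m1 + m2)%N, (glue _ c1 c2), (glue _ r1 r2); split.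
  by move=> i; rewrite /glue; case: (split i).
move=> D; rewrite big_split_ord def_x def_y /glue.
congr (_ + _); apply: eq_bigr => i _.
  by have /= -> := unsplitK (inl i : 'I_m1 + 'I_m2).
by have /= -> := unsplitK (inr i : 'I_m1 + 'I_m2).
Qed.

Lemma in_RZ a x : in_R x -> in_R (fun D => a * x D).
Proof.
move=> [m [c [r [rel_r def_x]]]]; exists m, (fun i => a * c i), r.
split=> // D; rewrite def_x mulr_sumr.
by apply: eq_bigr => i _; rewrite mulrA.
Qed.

Lemma in_RB x y : in_R x -> in_R y -> in_R (fun D => x D - y D).
Proof.
move=> Rx Ry; apply: in_RD => //.
by apply: in_R_ext (in_RZ (-1) Ry) => D; rewrite mulN1r.
Qed.

Lemma in_R_sum (x : nat -> vec F n) a b :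
  (forall k, (a <= k < b)%N -> in_R (x k)) ->
  in_R (fun D => \sum_(a <= k < b) x k D).
Proof.
elim: b => [|b IHb] Rx.
  by apply: in_R_ext in_R0 => D; rewrite big_geq.
have [le_ab | lt_ba] := leqP a b; last first.
  by apply: in_R_ext in_R0 => D; rewrite big_geq.
apply: in_R_ext (in_RD (IHb _) (Rx b _)) => [D||]; first by rewrite big_nat_recr.
  by move=> k /andP[le_ak lt_kb]; apply: Rx; rewrite le_ak ltnS ltnW.
by rewrite le_ab leqnn.
Qed.

End SpanOfCycleRelations.

Definition graph_of n (f : nat -> nat -> nat) : graph n :=
  [ffun e : 'I_n * 'I_n => f e.1 e.2].

Lemma eq_graph_of n (f g : nat -> nat -> nat) :
  (forall x y, x < n -> y < n -> f x y = g x y) -> graph_of n f = graph_of n g.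
Proof. by move=> eq_fg; apply/ffunP => -[x y]; rewrite !ffunE eq_fg. Qed.

Definition edge (a b : nat) : nat -> nat -> nat := fun x y => (x == a) && (y == b).

Lemma remove_edge_graph_of n f a b (lt_an : a < n) (lt_bn : b < n) :
  remove_edge (graph_of n f) (Ordinal lt_an, Ordinal lt_bn) =
  graph_of n (fun x y => f x y - edge a b x y).
Proof. by apply/ffunP => -[x y]; rewrite !ffunE. Qed.

Section CycleRelations.
Variables (F : fieldType) (n : nat) (f : nat -> nat -> nat).
Hypothesis loopless_f : forall x, x < n -> f x x = 0.

Notation basis_of g := (basis F (graph_of n g)).

Lemma two_cycle_in_R a b g h :
  a < n -> b < n -> a != b -> 0 < f a b -> 0 < f b a ->
  (forall x y, x < n -> y < n -> g x y = f x y - edge a b x y) ->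
  (forall x y, x < n -> y < n -> h x y = f x y - edge b a x y) ->
  in_R (fun D => basis_of g D + basis_of h D)%R.
Proof.
move=> lt_an lt_bn neq_ab fab fba /eq_graph_of-> /eq_graph_of->.
apply: cycle_rel_in_R; right.
pose v (i : 'I_2) := if val i == 0 then Ordinal lt_an else Ordinal lt_bn.
exists (graph_of n f), 0, v; split.
- by move=> x; rewrite ffunE loopless_f.
- move=> [[|[|i]] lt_i2] [[|[|j]] lt_j2] //= /(congr1 val) /= eq_v;
  apply: val_inj => //=; by rewrite eq_v eqxx in neq_ab.
- by move=> [[|[|i]] lt_i2] //=; rewrite ffunE.
- by move=> D; rewrite big_ord_recl big_ord1 -!remove_edge_graph_of.
Qed.

Lemma three_cycle_in_R a b c g h k :
  a < n -> b < n -> c < n -> a != b -> b != c -> a != c ->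
  0 < f a b -> 0 < f b c -> 0 < f c a ->
  (forall x y, x < n -> y < n -> g x y = f x y - edge a b x y) ->
  (forall x y, x < n -> y < n -> h x y = f x y - edge b c x y) ->
  (forall x y, x < n -> y < n -> k x y = f x y - edge c a x y) ->
  in_R (fun D => basis_of g D + basis_of h D + basis_of k D)%R.
Proof.
move=> lt_an lt_bn lt_cn neq_ab neq_bc neq_ac fab fbc fca.
move=> /eq_graph_of-> /eq_graph_of-> /eq_graph_of->.
apply: cycle_rel_in_R; right.
pose v (i : 'I_3) := if val i == 0 then Ordinal lt_an
  else if val i == 1 then Ordinal lt_bn else Ordinal lt_cn.
exists (graph_of n f), 1, v; split.
- by move=> x; rewrite ffunE loopless_f.
- move=> [[|[|[|i]]] lt_i3] [[|[|[|j]]] lt_j3] //= /(congr1 val) /= eq_v;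
  apply: val_inj => //=; by rewrite eq_v eqxx in neq_ab neq_bc neq_ac.
- by move=> [[|[|[|i]]] lt_i3] //=; rewrite ffunE.
- by move=> D; rewrite !big_ord_recl big_ord0 addr0 -!remove_edge_graph_of addrA.
Qed.

End CycleRelations.

Definition edge_count (a b : nat) (s : seq nat) : nat :=
  count (fun p : nat * nat => (p.1 == a) && (p.2 == b)) (zip s (behead s)).

Lemma edge_count_cons a b x s :
  edge_count a b (x :: s) =
  (if s is y :: _ then (x == a) && (y == b) else false) + edge_count a b s.
Proof. by case: s. Qed.

Lemma edge_count_iota a b i l :
  edge_count a b (iota i l) = (i <= a) && (b == a.+1) && (b < i + l).
Proof.
elim: l i => [|l IHl] i; first by rewrite /edge_count /=; lia.
by rewrite [iota _ _]/= edge_count_cons IHl; case: l {IHl} => [|l] /=; lia.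
Qed.

Lemma edge_count_cat a b x s y t :
  edge_count a b (x :: s ++ y :: t) =
  edge_count a b (x :: s) + edge_count a b (y :: t)
  + ((last x s == a) && (y == b)).
Proof.
elim: s x => [|z s IHs] x; first by rewrite /= edge_count_cons /edge_count /=; lia.
rewrite cat_cons edge_count_cons IHs.
by rewrite [edge_count a b (x :: z :: s)]edge_count_cons /=; lia.
Qed.

Lemma last_iota x i l : last x (iota i l.+1) = i + l.
Proof.
elim: l x i => [|l IHl] x i; first by rewrite addn0.
by rewrite -addSnnS -(IHl i i.+1).
Qed.

Definition chain : nat -> nat -> nat := fun x y => (0 < x) && (y == x.+1).
Definition chain_but (k : nat) : nat -> nat -> nat :=
  fun x y => (0 < x) && (y == x.+1) && (x != k).
Definition chain_src v x y := chain x y + edge 0 v x y.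
Definition chain_snk v x y := chain x y + edge v 0 x y.
(* For k = 0 this would contain the loop 0 -> 0; L_0 is [chain_src 1]. *)
Definition line_edges k x y := chain_but k x y + edge k 0 x y + edge 0 k.+1 x y.
Definition reversed_src k x y := chain_but k x y + edge k.+1 k x y + edge 0 k.+1 x y.
Definition reversed_snk k x y := chain_but k x y + edge k.+1 k x y + edge k 0 x y.

Lemma chain_split k x y : 0 < k -> chain x y = chain_but k x y + edge k k.+1 x y.
Proof. by rewrite /chain_but /chain /edge; lia. Qed.

Ltac unfold_edges :=
  cbv beta delta [chain_src chain_snk line_edges reversed_src reversed_snk].
Ltac edge_arith := unfold_edges; cbv beta delta [chain_but chain edge]; lia.

Lemma Lgraph0 n : 0 < n -> Lgraph n 0 = graph_of n (chain_src 1).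
Proof.
case: n => [|m] // _; apply/ffunP => -[[a lt_am] [b lt_bm]]; rewrite !ffunE /=.
change (edge_count a b (Lseq m.+1 0) = chain_src 1 a b).
rewrite /Lseq take0 drop0 edge_count_cons edge_count_iota.
by case: m lt_am lt_bm => [|m] /=; edge_arith.
Qed.

Lemma Lgraph_graph_of n k : 0 < k < n -> Lgraph n k = graph_of n (line_edges k).
Proof.
case/andP=> k_gt0 lt_kn; apply/ffunP => -[[a lt_an] [b lt_bn]]; rewrite !ffunE /=.
change (edge_count a b (Lseq n k) = line_edges k a b).
case: n lt_kn lt_an lt_bn => [|m] // lt_km lt_am lt_bm.
rewrite /Lseq take_iota drop_iota.
have -> : minn k m = k by lia.
case: k k_gt0 lt_km => [|k] // _ lt_km.
rewrite [iota 1 k.+1]/= edge_count_cat.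
have -> : last 1 (iota 2 k) = k.+1 by case: k {lt_km} => [|k] //; rewrite last_iota; lia.
rewrite -[1 :: iota 2 k]/(iota 1 k.+1) edge_count_cons !edge_count_iota.
(* Splitting on [b == a.+1] first keeps [lia] fast. *)
case def_r: (m - k.+1) => [|r] /=; rewrite /line_edges /chain_but /edge;
  case: (eqVneq b a.+1) lt_bm => [->|neq_ba] lt_bm;
  by rewrite ?eqxx ?(negbTE neq_ba) ?andbT ?andbF /=; lia.
Qed.

Section ChainRelations.
Variables (F : fieldType) (n : nat).
Local Open Scope ring_scope.
Notation basis_of g := (basis F (graph_of n g)).

Lemma line_reversed_in_R k : (0 < k)%N -> (k.+1 < n)%N ->
  in_R (fun D => basis_of (reversed_src k) D + basis_of (reversed_snk k) D
                 + basis_of (line_edges k) D).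
Proof.
move=> k_gt0 lt_k1n.
apply: (@three_cycle_in_R F n (fun x y => line_edges k x y + edge k.+1 k x y) _
  k 0 k.+1); try by move=> *; edge_arith.
all: by move=> x y _ _; unfold_edges; lia.
Qed.

Lemma reversed_src_in_R k : (0 < k)%N -> (k.+1 < n)%N ->
  in_R (fun D => basis_of (reversed_src k) D + basis_of (chain_src k.+1) D).
Proof.
move=> k_gt0 lt_k1n.
apply: (@two_cycle_in_R F n (fun x y => chain_src k.+1 x y + edge k.+1 k x y) _
  k k.+1); try by move=> *; edge_arith.
all: by move=> x y _ _; unfold_edges; rewrite (chain_split _ _ k_gt0); lia.
Qed.

Lemma reversed_snk_in_R k : (0 < k)%N -> (k.+1 < n)%N ->
  in_R (fun D => basis_of (reversed_snk k) D + basis_of (chain_snk k) D).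
Proof.
move=> k_gt0 lt_k1n.
apply: (@two_cycle_in_R F n (fun x y => chain_snk k x y + edge k.+1 k x y) _
  k k.+1); try by move=> *; edge_arith.
all: by move=> x y _ _; unfold_edges; rewrite (chain_split _ _ k_gt0); lia.
Qed.

Lemma chain_src_snk_in_R v : (0 < v)%N -> (v < n)%N ->
  in_R (fun D => basis_of (chain_src v) D + basis_of (chain_snk v) D).
Proof.
move=> v_gt0 lt_vn.
apply: (@two_cycle_in_R F n (fun x y => chain_src v x y + edge v 0 x y) _
  v 0); try by move=> *; edge_arith.
all: by move=> x y _ _; unfold_edges; lia.
Qed.

Lemma line_edges_telescoping k : (0 < k)%N -> (k.+1 < n)%N ->
  in_R (fun D => basis_of (line_edges k) D
                 - (basis_of (chain_src k.+1) D - basis_of (chain_src k) D)).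
Proof.
move=> k_gt0 lt_k1n.
have lt_kn : (k < n)%N by apply: ltnW.
apply: in_R_ext (in_RD (in_RB (in_RB (line_reversed_in_R k_gt0 lt_k1n)
  (reversed_src_in_R k_gt0 lt_k1n)) (reversed_snk_in_R k_gt0 lt_k1n))
  (chain_src_snk_in_R k_gt0 lt_kn)) => D.
ring.
Qed.

End ChainRelations.

Local Open Scope ring_scope.

Theorem lemma4p6 (F : fieldType) (charF0 : [pchar F] =i pred0) (n : nat)
  (hn : (2 <= n)%N) :
  in_R (fun D : graph n => \sum_(j < n) basis F (Lgraph n j) D).
Proof.
(* The relation holds over any field. *)
case: n hn => [|[|m]] // _.
pose b f D := basis F (graph_of m.+2 f) D.
have line_last : graph_of m.+2 (line_edges m.+1) = graph_of m.+2 (chain_snk m.+1).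
  by apply: eq_graph_of => *; edge_arith.
have R_steps : in_R (fun D => \sum_(1 <= k < m.+1)
    (b (line_edges k) D - (b (chain_src k.+1) D - b (chain_src k) D))).
  by apply: in_R_sum => k /andP[k_gt0 lt_km]; apply: line_edges_telescoping.
apply: in_R_ext (in_RD R_steps (@chain_src_snk_in_R F m.+2 m.+1 _ _)) => // D.
rewrite sumrB telescope_sumr // -(big_mkord xpredT (fun j => basis F (Lgraph m.+2 j) D)).
rewrite [RHS]big_nat_recr //= (@big_ltn _ _ _ 0 m.+1) //.
rewrite [X in _ = _ + X + _](eq_big_nat _ _ (F2 := fun k => b (line_edges k) D)).
  have lt_m1 : (0 < m.+1 < m.+2)%N by rewrite ltnSn.
  by rewrite Lgraph0 // (Lgraph_graph_of lt_m1) line_last /b; ring.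
by move=> k /andP[k_gt0 lt_km]; rewrite Lgraph_graph_of // k_gt0 ltnS (ltnW lt_km).
Qed.
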